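(* Let $\widetilde{\Sigma}_1,\ldots,\widetilde{\Sigma}_n$ be pairwise disjoint visibly pushdown alphabets, $\widetilde{\Sigma}=\widetilde{\Sigma}_1\uplus\cdots\uplus\widetilde{\Sigma}_n$, and let $P_i\subseteq\widetilde{\Sigma}_i^*$ be well-matched visibly pushdown languages. Let $\mathcal{M}$ be a semantics on a state set $C$ in which every call and every return of each $\widetilde{\Sigma}_i$ belongs to $\widetilde{\Sigma}_i^{\mathsf{indep}}$. If every $P_i$ is tail-independent (or, respectively, every $P_i$ is head-independent), then for all $\mathsf{pre},\mathsf{post}\subseteq C$: $\{\mathsf{pre}\}\,P_1\bowtie\cdots\bowtie P_n\,\{\mathsf{post}\}$ implies $\{\mathsf{pre}\}\,P_1\parallel\cdots\parallel P_n\,\{\mathsf{post}\}$.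
   Context: A visibly pushdown (VP) alphabet is a finite alphabet partitioned into calls, returns and internals; $\widetilde{\Sigma}$ has as calls/returns/internals the unions. Calls and returns in a word are matched like opening and closing parentheses (internals ignored); a word is well-matched if all calls and returns are matched. Visibly pushdown languages are those accepted by pushdown automata that push on calls, pop on returns and leave the stack unchanged on internals. Shuffle: $P_1\parallel\cdots\parallel P_n=\{w\in\widetilde{\Sigma}^*:\Pi_{\widetilde{\Sigma}_i}(w)\in P_i\ \forall i\}$, $\Pi_{\widetilde{\Sigma}_i}$ erasing letters outside $\widetilde{\Sigma}_i$; a word is well-nested if every matched call–return pair consists of letters from the same $\widetilde{\Sigma}_k$; $P_1\bowtie\cdots\bowtie P_n$ is the set of well-nested words of the shuffle. A semantics is a map $\mathcal{M}$ from letters of $\widetilde{\Sigma}$ to binary relations on a set $C$ of states, extended to words by relational composition ($\mathcal{M}(\epsilon)$ is the identity, $\mathcal{M}(wa)$ is $\mathcal{M}(w)$ followed by $\mathcal{M}(a)$). For $\mathsf{pre},\mathsf{post}\subseteq C$ and a language $L$, $\{\mathsf{pre}\}L\{\mathsf{post}\}$ means: for all $\rho\in L$ and $(s,s')\in\mathcal{M}(\rho)$, $s\in\mathsf{pre}$ implies $s'\in\mathsf{post}$. Letters $a,b$ soundly commute if $\mathcal{M}(ab)=\mathcal{M}(ba)$. $\widetilde{\Sigma}_i^{\mathsf{indep}}$ is the set of letters of $\widetilde{\Sigma}_i$ that soundly commute with every letter of every $\widetilde{\Sigma}_j$, $j\ne i$. $P_i$ is tail-independent (resp. head-independent) if every $\rho\in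 P_i$ can be written $\rho=uv$, $u,v\in\widetilde{\Sigma}_i^*$, such that (1) all calls are in $u$ and all returns in $v$, except those at a position $j$ such that all letters between $j$ and its matching position are in $\widetilde{\Sigma}_i^{\mathsf{indep}}$; and (2) all letters of $v$ (resp. of $u$) are in $\widetilde{\Sigma}_i^{\mathsf{indep}}$. *)

From mathcomp Require Import all_boot.
Set Implicit Arguments. Unset Strict Implicit. Unset Printing Implicit Defensive.

Inductive lkind := LCall | LRet | LInt.

Section VP.
Variable T : Type.
Variable kind : T -> lkind.

Inductive wm : seq T -> Prop :=
| wm_nil : wm [::]
| wm_int a w : kind a = LInt -> wm w -> wm (a :: w)
| wm_nest c w1 r w2 : kind c = LCall -> kind r = LRet -> wm w1 -> wm w2 ->
    wm (c :: w1 ++ r :: w2).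

(* position j (a call) is matched with position k (a return) in w
   (positions numbered from 0) *)
Definition matched (w : seq T) (j k : nat) : Prop :=
  j < k /\
  (exists c, onth w j = Some c /\ kind c = LCall) /\
  (exists r, onth w k = Some r /\ kind r = LRet) /\
  wm (take (k - j.+1) (drop j.+1 w)).

Definition well_matched (w : seq T) : Prop :=
  forall j a, onth w j = Some a ->
    (kind a = LCall -> exists k, matched w j k) /\
    (kind a = LRet -> exists k, matched w k j).

(* Visibly pushdown automata (returns on the empty stack allowed, reading
   the bottom symbol None); acceptance by final state. *)
Record vpa := VPA {
  vQ : finType; vG : finType;
  vinit : pred vQ; vfin : pred vQ;
  vcall : vQ -> T -> vQ -> vG -> bool;
  vret : vQ -> T -> option vG -> vQ -> bool;
  vint : vQ -> T -> vQ -> bool }.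

Definition vstep (A : vpa) (c : vQ A * seq (vG A)) (a : T)
    (c' : vQ A * seq (vG A)) : Prop :=
  match kind a with
  | LCall => exists g, vcall c.1 a c'.1 g /\ c'.2 = g :: c.2
  | LRet => (exists g st0, c.2 = g :: st0 /\ c'.2 = st0 /\ vret c.1 a (Some g) c'.1)
            \/ (c.2 = [::] /\ c'.2 = [::] /\ vret c.1 a None c'.1)
  | LInt => vint c.1 a c'.1 /\ c'.2 = c.2
  end.

Fixpoint vrun (A : vpa) (c : vQ A * seq (vG A)) (w : seq T)
    (c' : vQ A * seq (vG A)) : Prop :=
  match w with
  | [::] => c = c'
  | a :: w' => exists c1, vstep c a c1 /\ vrun c1 w' c'
  end.

Definition vaccepts (A : vpa) (w : seq T) : Prop :=
  exists (q0 qf : vQ A) (st : seq (vG A)), vinit q0 /\ vfin qf /\ @vrun A (q0, [::]) w (qf, st).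

Definition is_VPL (L : seq T -> Prop) : Prop :=
  exists A : vpa, forall w, L w <-> vaccepts A w.

Section Sem.
Variable C : Type.
Variable M : T -> C -> C -> Prop.

Fixpoint semw (w : seq T) : C -> C -> Prop :=
  match w with
  | [::] => fun s s' => s = s'
  | a :: w' => fun s s' => exists t, M a s t /\ semw w' t s'
  end.

Definition hoare (pre : C -> Prop) (L : seq T -> Prop) (post : C -> Prop) :=
  forall rho, L rho -> forall s s', semw rho s s' -> pre s -> post s'.

Definition sound_commute (a b : T) : Prop :=
  forall s s', semw [:: a; b] s s' <-> semw [:: b; a] s s'.

Variable n : nat.
Variable comp : T -> 'I_n.  (* the alphabet Sigma_i a letter belongs to *)

Definition proj (i : 'I_n) (w : seq T) : seq T := [seq a <- w | comp a == i].

Definition indep (i : 'I_n) (a : T) : Prop :=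
  comp a = i /\ forall b, comp b <> i -> sound_commute a b.

Definition shuffle (P : 'I_n -> seq T -> Prop) (w : seq T) : Prop :=
  forall i, P i (proj i w).

Definition well_nested (w : seq T) : Prop :=
  forall j k a b, matched w j k -> onth w j = Some a -> onth w k = Some b ->
    comp a = comp b.

Definition bowtie (P : 'I_n -> seq T -> Prop) (w : seq T) : Prop :=
  shuffle P w /\ well_nested w.

Definition indep_span (i : 'I_n) (rho : seq T) (j : nat) : Prop :=
  exists k, (matched rho j k \/ matched rho k j) /\
    forall l a, minn j k < l < maxn j k -> onth rho l = Some a -> indep i a.

Definition split_cond (i : 'I_n) (rho u : seq T) : Prop :=
  forall j a, onth rho j = Some a ->
    ((kind a = LCall /\ size u <= j) \/ (kind a = LRet /\ j < size u)) ->
    indep_span i rho j.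

Definition tail_indep (i : 'I_n) (L : seq T -> Prop) : Prop :=
  forall rho, L rho -> exists u v, rho = u ++ v /\ split_cond i rho u /\
    (forall l a, onth v l = Some a -> indep i a).

Definition head_indep (i : 'I_n) (L : seq T -> Prop) : Prop :=
  forall rho, L rho -> exists u v, rho = u ++ v /\ split_cond i rho u /\
    (forall l a, onth u l = Some a -> indep i a).

End Sem.
End VP.

From mathcomp Require Import all_boot zify.
From Stdlib Require Import ClassicalEpsilon.
Set Implicit Arguments. Unset Strict Implicit. Unset Printing Implicit Defensive.

(* Letters of different components commute unless both are dependent (outside
   Sigma_i^indep), so any word with the same projections and the same subsequence of
   dependent letters as rho has a semantics containing that of rho: it suffices to find such
   a word that is well-nested.  Calls and returns are independent, hence dependent letters
   are internals.  Walk through the dependent letters of rho in order, emitting before each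
   one the rest of its component up to it; when none is left, close the pending calls in
   stack order, each by the next return of its own component.  Tail-independence makes every
   return that precedes a dependent letter close, across independent letters only, a call of
   the same emitted piece; so emitted pieces never return below their starting height and
   every return closes a call of its own component.  The head-independent case is the mirror
   image under reversal of words, exchanging calls and returns. *)

Lemma onth_splitP (T : Type) (w : seq T) j a :
  onth w j = Some a <-> exists p q, w = p ++ a :: q /\ size p = j.
Proof.
elim: w j => [|b w IH] [|j] /=.
- by split=> // -[[|? ?] [? [? _]]].
- by split=> // -[[|? ?] [? [? _]]].
- split=> [[<-]|]; first by exists [::], w.
  by case=> [[|c p]] [q [[-> _] //]].
- split=> [/IH [p [q [-> <-]]]|]; first by exists (b :: p), q.
  case=> -[|c p] [q [//= [_ ew] [sp]]].
  by apply/IH; exists p, q.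
Qed.

Lemma cat_eq_size (T : Type) (x1 y1 x2 y2 : seq T) :
  size x1 = size x2 -> x1 ++ y1 = x2 ++ y2 -> x1 = x2 /\ y1 = y2.
Proof.
move=> s e; split.
- by have := congr1 (take (size x1)) e; rewrite take_size_cat // s take_size_cat.
- by have := congr1 (drop (size x1)) e; rewrite drop_size_cat // s drop_size_cat.
Qed.

Lemma drop_cat_leq (T : Type) n (s1 s2 : seq T) :
  n <= size s1 -> drop n (s1 ++ s2) = drop n s1 ++ s2.
Proof.
move=> le_ns1; rewrite -{1}(cat_take_drop n s1) -catA drop_size_cat //.
by rewrite size_take_min (minn_idPl le_ns1).
Qed.

Lemma filter_nilP (T : Type) (a : pred T) s : reflect (filter a s = [::]) (~~ has a s).
Proof. by rewrite has_count -size_filter -leqNgt leqn0; apply: nilP. Qed.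

Section Height.
Variables (T : Type) (kind : T -> lkind).

(* Stack height reached from height [k]; a return on the empty stack keeps height 0, and
   [nodip k w] says this never happens. *)
Fixpoint height (k : nat) (w : seq T) : nat :=
  if w is a :: w' then
    height (match kind a with LCall => k.+1 | LRet => k.-1 | LInt => k end) w'
  else k.

Fixpoint nodip (k : nat) (w : seq T) : bool :=
  if w is a :: w' then
    match kind a with
    | LCall => nodip k.+1 w'
    | LRet => (k != 0) && nodip k.-1 w'
    | LInt => nodip k w'
    end
  else true.

Definition balanced (w : seq T) : Prop := forall k, nodip k w /\ height k w = k.

Lemma height_cat k x y : height k (x ++ y) = height (height k x) y.
Proof. by elim: x k => [|a x IH] k //=. Qed.

Lemma nodip_cat k x y : nodip k (x ++ y) = nodip k x && nodip (height k x) y.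
Proof. by elim: x k => [|a x IH] k //=; case: (kind a); rewrite IH ?andbA. Qed.

Lemma height_rcons k x a : height k (rcons x a) =
  match kind a with LCall => (height k x).+1 | LRet => (height k x).-1 | LInt => height k x end.
Proof. by rewrite -cats1 height_cat. Qed.

Lemma nodip_rcons k x a : nodip k (rcons x a) =
  nodip k x && (if kind a is LRet then height k x != 0 else true).
Proof. by rewrite -cats1 nodip_cat /=; case: (kind a); rewrite ?andbT. Qed.

Lemma height_addn j k p : nodip j p -> height (k + j) p = k + height j p.
Proof.
elim: p j => [|a p IH] j //=; case: (kind a) => [|/andP[]|]; last exact: IH.
- by rewrite -addnS; apply: IH.
- by case: j => // j _; rewrite addnS; apply: IH.
Qed.

Lemma wm_balanced m : wm kind m -> balanced m.
Proof.
elim=> [|a w ha _ IH|c w1 r w2 hc hr _ IH1 _ IH2] k //=; first by rewrite ha.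
rewrite hc nodip_cat height_cat; have [-> ->] := IH1 k.+1.
by rewrite /= hr; apply: IH2.
Qed.

Lemma first_dip j x : ~~ nodip j x -> exists x1 r x2, x = x1 ++ r :: x2 /\
  nodip j x1 /\ height j x1 = 0 /\ kind r = LRet.
Proof.
elim: x j => [|a x IH] //= j.
case E: (kind a); case: j => [|j] /=; try by exists [::], a, x.
all: by move/IH=> [x1 [r [x2 [-> h]]]]; exists (a :: x1), r, x2; rewrite /= E.
Qed.

Lemma last_open_call h x : h < height 0 x -> exists x1 c x2, x = x1 ++ c :: x2 /\
  kind c = LCall /\ nodip 0 x2 /\ h <= height 0 x2.
Proof.
elim/last_ind: x h => [|y a IH] h //=.
rewrite height_rcons; case E: (kind a) => H.
- case: h H => [_|h /IH [x1 [c [x2 [-> [hc [h1 h2]]]]]]].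
    by exists y, a, [::]; rewrite cats1.
  by exists x1, c, (rcons x2 a); rewrite rcons_cat nodip_rcons height_rcons E h1.
- have /IH [x1 [c [x2 [-> [hc [h1 h2]]]]]] : h.+1 < height 0 y by lia.
  exists x1, c, (rcons x2 a); rewrite rcons_cat nodip_rcons height_rcons E h1.
  by do !split=> //; lia.
- have [x1 [c [x2 [-> [hc [h1 h2]]]]]] := IH h H.
  by exists x1, c, (rcons x2 a); rewrite rcons_cat nodip_rcons height_rcons E h1.
Qed.

Lemma split_first_dip j k x : nodip (j + k.+1) x -> height (j + k.+1) x <= k ->
  exists x1 r x2, x = x1 ++ r :: x2 /\ nodip j x1 /\ height j x1 = 0 /\
    kind r = LRet /\ nodip k x2 /\ height k x2 = height (j + k.+1) x.
Proof.
elim: x j => [|a x IH] j /=; first by rewrite leqNgt ltn_addl.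
case E: (kind a).
- move=> h1 h2; have [x1 [r [x2 [-> h]]]] := IH j.+1 h1 h2.
  by exists (a :: x1), r, x2; rewrite /= E.
- case: j => [|j] /andP[_ h1] h2; first by exists [::], a, x.
  have [x1 [r [x2 [-> h]]]] := IH j h1 h2.
  by exists (a :: x1), r, x2; rewrite /= E.
- move=> h1 h2; have [x1 [r [x2 [-> h]]]] := IH j h1 h2.
  by exists (a :: x1), r, x2; rewrite /= E.
Qed.
End Height.

Section Matching.
Variables (T : Type) (kind : T -> lkind).

Lemma matched_split w j k : matched kind w j k -> exists p c m r q,
  w = p ++ c :: m ++ r :: q /\ size p = j /\ size (p ++ c :: m) = k /\
  kind c = LCall /\ kind r = LRet /\ wm kind m.
Proof.
case=> jk [[c [/onth_splitP [p [q0 [wd sp]]] kc]] [[r [or kr]] hwm]].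
have /onth_splitP [m [q [qd sm]]] : onth q0 (k - j.+1) = Some r.
  by move: or; rewrite wd onth_cat sp ltnNge (ltnW jk) /= -subnSK.
exists p, c, m, r, q; rewrite wd qd size_cat /= sm sp; do !split => //; first lia.
by move: hwm; rewrite wd qd -cat_rcons drop_size_cat ?size_rcons ?sp // -sm take_size_cat.
Qed.

Lemma well_matched_balanced w : well_matched kind w -> nodip kind 0 w /\ height kind 0 w = 0.
Proof.
move=> wmw; have ndw : nodip kind 0 w.
  apply: contraT => /first_dip [x1 [r [x2 [wd [_ [h1 kr]]]]]].
  have /wmw [_ /(_ kr) [k /matched_split [p [c [m [r' [q [wd' [_ [sm [kc [_ hw]]]]]]]]]]]] :
    onth w (size x1) = Some r by apply/onth_splitP; exists x1, x2.
  have [ex1 _] : x1 = p ++ c :: m /\ r :: x2 = r' :: q.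
    by apply: cat_eq_size; rewrite ?sm // -catA -wd -wd'.
  by move: h1; rewrite ex1 height_cat /= kc; have [_ ->] := wm_balanced hw (height kind 0 p).+1.
split=> //; apply/eqP; rewrite -leqn0 leqNgt; apply/negP.
move=> /last_open_call [x1 [c [x2 [wd [kc [n2 _]]]]]].
have /wmw [/(_ kc) [k /matched_split [p [c' [m [r [q [wd' [sp [_ [_ [kr hw]]]]]]]]]]] _] :
  onth w (size x1) = Some c by apply/onth_splitP; exists x1, x2.
have [_ [_ ex2]] : p = x1 /\ c' :: m ++ r :: q = c :: x2.
  by apply: cat_eq_size; rewrite // -wd -wd'.
by move: n2; rewrite -ex2 nodip_cat; have [-> ->] := wm_balanced hw 0; rewrite /= kr.
Qed.

Lemma wm_cat x y : wm kind x -> wm kind y -> wm kind (x ++ y).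
Proof.
elim=> [|a w ha _ IH|c w1 r w2 hc hr h1 _ _ IH2] hy //=.
- by apply: wm_int ha (IH hy).
- by rewrite -catA /=; apply: wm_nest hc hr h1 (IH2 hy).
Qed.
End Matching.

Definition swap_kind (k : lkind) : lkind :=
  match k with LCall => LRet | LRet => LCall | LInt => LInt end.

Section Reversal.
Variables (T : Type) (kind : T -> lkind).
Let kind' a := swap_kind (kind a).

Lemma nodip_rev k x : nodip kind k x ->
  nodip kind' (height kind k x) (rev x) /\ height kind' (height kind k x) (rev x) = k.
Proof.
elim: x k => [|a x IH] k //=; rewrite rev_cons nodip_rcons height_rcons.
have kind'E : kind' a = swap_kind (kind a) by [].
rewrite kind'E; case: (kind a) => /=; try by move=> /IH [-> ->].
by case: k => // k /IH [-> ->].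
Qed.

Lemma balanced_rev m : balanced kind m -> balanced kind' (rev m).
Proof. by move=> bm k; have [/nodip_rev + hk] := bm k; rewrite hk. Qed.

Lemma wm_rev m : wm kind m -> wm kind' (rev m).
Proof.
elim=> [|a w ha _ IH|c w1 r w2 hc hr _ IH1 _ IH2]; first exact: wm_nil.
- rewrite rev_cons -cats1; apply: wm_cat IH (wm_int _ (wm_nil _)).
  by rewrite /kind' ha.
- rewrite rev_cons rev_cat rev_cons -!cats1 -!catA; apply: wm_cat IH2 _.
  have := wm_nest (kind := kind') (c := r) (r := c) (w2 := [::]) _ _ IH1 (wm_nil _).
  by rewrite cats1 /kind' hr hc; apply.
Qed.
End Reversal.

Section Nesting.
Variables (T : Type) (kind : T -> lkind) (n : nat) (comp : T -> 'I_n).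

(* [s] is the stack of the components of the pending calls. *)
Fixpoint nested_from (s : seq 'I_n) (w : seq T) : bool :=
  if w is a :: w' then
    match kind a with
    | LCall => nested_from (comp a :: s) w'
    | LRet => if s is i :: s' then (comp a == i) && nested_from s' w'
              else nested_from [::] w'
    | LInt => nested_from s w'
    end
  else true.

Definition nested_pairs (w : seq T) : Prop :=
  forall p c m r q, w = p ++ c :: m ++ r :: q -> kind c = LCall -> kind r = LRet ->
    wm kind m -> comp c = comp r.

Lemma nested_pairs_well_nested w : nested_pairs w -> well_nested kind comp w.
Proof.
move=> H j k a b /matched_split [p [c [m [r [q [wd [sp [sk [kc [kr hw]]]]]]]]]].
have -> : onth w j = Some c by apply/onth_splitP; exists p, (m ++ r :: q).
have -> : onth w k = Some r by apply/onth_splitP; exists (p ++ c :: m), q; rewrite wd -catA.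
by move=> [<-] [<-]; apply: H wd kc kr hw.
Qed.

Lemma nested_from_suffix s x y : nested_from s (x ++ y) -> exists s', nested_from s' y.
Proof.
elim: x s => [|a x IH] s /=; first by exists s.
case: (kind a); [exact: IH | | exact: IH].
by case: s => [|i s]; [apply: IH | case/andP=> _; apply: IH].
Qed.

Lemma nested_from_wm m : wm kind m -> forall s y, nested_from s (m ++ y) -> nested_from s y.
Proof.
elim=> [|a w ha _ IH|c w1 r w2 hc hr _ IH1 _ IH2] s y //=; first by rewrite ha; apply: IH.
by rewrite hc -catA => /IH1 /=; rewrite hr => /andP[_]; apply: IH2.
Qed.

Lemma nested_from_pairs s w : nested_from s w -> nested_pairs w.
Proof.
move=> + p c m r q wd kc kr hw; rewrite wd => /nested_from_suffix [s' /=].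
by rewrite kc => /(nested_from_wm hw) /=; rewrite kr => /andP[/eqP].
Qed.

Lemma nested_from_component i p k s y : all (fun a => comp a == i) p -> nodip kind k p ->
  nested_from (nseq (height kind k p) i ++ s) y -> nested_from (nseq k i ++ s) (p ++ y).
Proof.
elim: p k => [|a p IH] k //= /andP[/eqP ->]; case: (kind a) => [||] hp.
- exact: IH.
- by case: k hp => [|k] //= hp; rewrite eqxx; apply: IH.
- exact: IH.
Qed.
End Nesting.

Lemma nested_pairs_rev (T : Type) (kind : T -> lkind) n (comp : T -> 'I_n) w :
  nested_pairs (fun a => swap_kind (kind a)) comp (rev w) -> nested_pairs kind comp w.
Proof.
move=> H p c m r q wd kc kr hw; apply/esym/(H (rev q) r (rev m) c (rev p)).
- by rewrite wd !(rev_cat, rev_cons) -!cats1 -!catA.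
- by rewrite kr.
- by rewrite kc.
- exact: wm_rev.
Qed.

Section Interleaving.
Variables (T : Type) (kind : T -> lkind) (n : nat) (comp : T -> 'I_n) (d : pred T).
Hypothesis d_internal : forall a, d a -> kind a = LInt.

Inductive dep_blocks : seq T -> Prop :=
| dep_blocks_free w : ~~ has d w -> dep_blocks w
| dep_blocks_cons p x w : ~~ has d p -> nodip kind 0 p -> d x -> dep_blocks w ->
    dep_blocks (p ++ x :: w).

Definition returns_closed (w : seq T) : Prop :=
  forall x r y, w = x ++ r :: y -> kind r = LRet -> has d y ->
    exists p c m, x = p ++ c :: m /\ kind c = LCall /\ balanced kind m /\ ~~ has d m.

Lemma call_not_dep c : kind c = LCall -> ~~ d c.
Proof. by move=> kc; apply/negP => /d_internal; rewrite kc. Qed.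

(* A call closed across a [d]-free segment cannot lie before a letter of [d]. *)
Lemma returns_closed_drop a e w : d e -> returns_closed (rcons a e ++ w) -> returns_closed w.
Proof.
move=> de H x r y wd kr hy.
have wd' : rcons a e ++ w = (rcons a e ++ x) ++ r :: y by rewrite wd catA.
have [p [c [m [ex [kc hm]]]]] := H _ _ _ wd' kr hy.
have [lt_ap|le_pa] := ltnP (size a) (size p).
  exists (drop (size (rcons a e)) p), c, m; split=> //.
  have := congr1 (drop (size (rcons a e))) ex.
  by rewrite drop_size_cat // drop_cat_leq // size_rcons.
have := congr1 (drop (size p)) ex.
rewrite drop_cat_leq ?size_rcons ?(leqW le_pa) // drop_size_cat //.
rewrite drop_rcons // => ecm.
have : has d (c :: m) by rewrite -ecm has_cat has_rcons de.
by rewrite /= (negbTE (call_not_dep kc)) (negbTE hm.2).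
Qed.

Lemma returns_closed_dep_blocks w : returns_closed w -> dep_blocks w.
Proof.
have [N] := ubnP (size w); elim: N w => // N IH w size_w H.
case hw: (has d w); last by apply: dep_blocks_free; rewrite hw.
case: (split_find hw) size_w H => x p q dx hp size_w H.
rewrite cat_rcons; apply: dep_blocks_cons => //.
  apply: contraT => /first_dip [x1 [r [x2 [ep [_ [h1 kr]]]]]].
  have wd : rcons p x ++ q = x1 ++ r :: (x2 ++ x :: q) by rewrite ep cat_rcons -catA.
  have [|p0 [c [m [ex1 [kc [bm _]]]]]] := H _ _ _ wd kr; first by rewrite has_cat /= dx orbT.
  by move: h1; rewrite ex1 height_cat /= kc; have [_ ->] := bm (height kind 0 p0).+1.
apply: IH (returns_closed_drop dx H).
by move: size_w; rewrite size_cat size_rcons; lia.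
Qed.

Lemma dep_blocks_first w x D : dep_blocks w -> filter d w = x :: D ->
  exists p q, w = p ++ x :: q /\ ~~ has d p /\ nodip kind 0 p /\ d x /\ dep_blocks q /\
    filter d q = D.
Proof.
case=> [w0 /filter_nilP ->|p y q hp np dy bq] //.
have /filter_nilP pd := hp; rewrite filter_cat pd /= dy.
by case=> <- <-; exists p, q.
Qed.

Lemma proj_component i p j : all (fun a => comp a == i) p ->
  proj comp j p = if i == j then p else [::].
Proof.
elim: p => [|a p IH] /=; first by case: eqP.
by case/andP=> /eqP ca /IH; rewrite /proj /= ca => ->; case: eqP.
Qed.

Lemma proj_prepend (rho : 'I_n -> seq T) i p x q w :
  all (fun a => comp a == i) p -> comp x = i -> rho i = p ++ x :: q ->
  (forall j, proj comp j w = [eta rho with i |-> q] j) ->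
  forall j, proj comp j (p ++ x :: w) = rho j.
Proof.
move=> cp cx ri pw j; rewrite /proj filter_cat /= -/(proj comp j p) -/(proj comp j w).
rewrite pw (proj_component _ cp) cx /=; case: (i =P j) => [<-|ne]; first by rewrite eqxx ri.
by case: (j =P i) => // e; case: ne.
Qed.

Lemma interleave_closing s (rho : 'I_n -> seq T) :
  (forall i, all (fun a => comp a == i) (rho i)) -> (forall i, ~~ has d (rho i)) ->
  (forall i, nodip kind (count_mem i s) (rho i) /\ height kind (count_mem i s) (rho i) = 0) ->
  exists w, (forall i, proj comp i w = rho i) /\ ~~ has d w /\ nested_from kind comp s w.
Proof.
elim: s rho => [|i s IH] rho hc hd hb.
  exists (\big[cat/[::]]_(j < n) rho j); split; [|split].
  - move=> i; rewrite (big_morph (proj comp i) (fun x y => filter_cat _ x y)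
      (erefl : proj comp i [::] = [::])).
    rewrite (eq_bigr (fun j => if j == i then rho i else [::])).
      by rewrite -big_mkcond big_pred1_eq.
    by move=> j _; rewrite (proj_component _ (hc j)); case: eqP => // ->.
  - rewrite (big_morph (has d) (fun x y => has_cat _ x y) (erefl : has d [::] = false)).
    by rewrite big1 // => j _; apply/negbTE.
  - elim/big_rec: _ => // j w _ hw; have [nj hj] := hb j.
    by rewrite -[[::]]/(nseq 0 j ++ [::]); apply: nested_from_component (hc j) nj _; rewrite hj.
have [ni hi] := hb i; rewrite /= eqxx add1n in ni hi.
have [|x1 [r [x2 [ri [nx1 [hx1 [kr [nx2 hx2]]]]]]]] :=
  split_first_dip (j := 0) (k := count_mem i s) ni; first by rewrite hi.
have := hc i; rewrite ri all_cat /= => /and3P[cx1 /eqP cr cx2].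
have := hd i; rewrite ri has_cat /= negb_or => /andP[dx1 /norP[dr dx2]].
have [|||w [pw [dw nw]]] := IH [eta rho with i |-> x2].
- by move=> j /=; case: (j =P i) => [->|_].
- by move=> j /=; case: (j =P i).
- move=> j /=; case: (j =P i) => [->|/eqP ne]; first by rewrite nx2 hx2.
  by have := hb j; rewrite /= eq_sym (negbTE ne).
exists (x1 ++ r :: w); split; [exact: proj_prepend cx1 cr ri pw|split].
  by rewrite has_cat /= (negbTE dx1) (negbTE dr).
rewrite -[i :: s]/(nseq 0 i ++ i :: s); apply: nested_from_component cx1 nx1 _.
by rewrite hx1 /= kr cr eqxx.
Qed.

Lemma interleave_nested D s (rho : 'I_n -> seq T) :
  (forall i, all (fun a => comp a == i) (rho i)) ->
  (forall i, proj comp i D = filter d (rho i)) -> (forall i, dep_blocks (rho i)) ->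
  (forall i, nodip kind (count_mem i s) (rho i) /\ height kind (count_mem i s) (rho i) = 0) ->
  exists w, (forall i, proj comp i w = rho i) /\ filter d w = D /\ nested_from kind comp s w.
Proof.
elim: D s rho => [|x D IH] s rho hc hD hg hb.
  have [|w [pw [/filter_nilP dw nw]]] := interleave_closing hc _ hb; last by exists w.
  by move=> i; apply/filter_nilP; rewrite -hD.
set i := comp x.
have fi : filter d (rho i) = x :: proj comp i D by rewrite -hD /proj /= eqxx.
have [p [q [ri [dp [np [dx [gq fq]]]]]]] := dep_blocks_first (hg i) fi.
have := hc i; rewrite ri all_cat /= => /and3P[cp /eqP cx cq].
have [] := hb i; rewrite ri nodip_cat height_cat /= (d_internal dx) => /andP[_ nq] hq.
have hp : height kind (count_mem i s) p = height kind 0 p + count_mem i s.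
  by rewrite addnC -height_addn // addn0.
set rho' := [eta rho with i |-> q].
have hc' j : all (fun a => comp a == j) (rho' j) by rewrite /rho' /=; case: (j =P i) => [->|].
have hD' j : proj comp j D = filter d (rho' j).
  rewrite /rho' /=; case: (j =P i) => [->|ne]; first by rewrite fq.
  by rewrite -hD /proj /= cx; case: (i =P j) => // e; case: ne.
have hg' j : dep_blocks (rho' j) by rewrite /rho' /=; case: (j =P i).
have hb' j : nodip kind (count_mem j (nseq (height kind 0 p) i ++ s)) (rho' j) /\
    height kind (count_mem j (nseq (height kind 0 p) i ++ s)) (rho' j) = 0.
  rewrite /rho' count_cat count_nseq /=; case: (j =P i) => [->|/eqP ne].
    by rewrite eqxx mul1n -hp nq hq.
  by rewrite eq_sym (negbTE ne) mul0n add0n; apply: hb.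
have [w [pw [fw nw]]] := IH _ _ hc' hD' hg' hb'.
exists (p ++ x :: w); split; [exact: proj_prepend cp cx ri pw|split].
  by have /filter_nilP pd := dp; rewrite filter_cat pd /= dx fw.
rewrite -[s]/(nseq 0 i ++ s); apply: nested_from_component cp np _.
by rewrite /= (d_internal dx).
Qed.

Lemma nested_reordering w :
  (forall i, dep_blocks (proj comp i w)) ->
  (forall i, nodip kind 0 (proj comp i w) /\ height kind 0 (proj comp i w) = 0) ->
  exists w', (forall i, proj comp i w' = proj comp i w) /\ filter d w' = filter d w /\
    nested_from kind comp [::] w'.
Proof.
move=> hg hb; apply: interleave_nested => // i; first exact: filter_all.
by rewrite /proj -!filter_predI; apply: eq_filter => a; apply: andbC.
Qed.
End Interleaving.

Section Reordering.
Variables (T : eqType) (C : Type) (M : T -> C -> C -> Prop) (n : nat) (comp : T -> 'I_n).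

Lemma sound_commute_sym a b : sound_commute M a b -> sound_commute M b a.
Proof. by move=> h s s'; split => /h. Qed.

Lemma semw_move_front x a y s s' : (forall e, e \in x -> sound_commute M e a) ->
  semw M (x ++ a :: y) s s' -> semw M (a :: x ++ y) s s'.
Proof.
elim: x s => [|e x IH] s //= hx [t [h1 hxy]].
have [|u [hau hxy']] := IH t _ hxy; first by move=> e' ex; apply: hx; rewrite inE ex orbT.
have [|v [hav [u' [heu' eu]]]] := (hx e (mem_head _ _) s u).1.
  by exists t; split=> //; exists u.
by subst u'; exists v; split=> //; exists u.
Qed.

Variable d : pred T.
Hypothesis indep_of_not_d : forall a, ~~ d a -> indep M comp (comp a) a.

(* Mazurkiewicz trace argument: only letters of [d] from different components fail to commute. *)
Lemma semw_reorder w' : forall w, (forall i, proj comp i w = proj comp i w') ->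
  filter d w = filter d w' -> forall s s', semw M w s s' -> semw M w' s s'.
Proof.
elim: w' => [|a w' IH] w hp hd s s'.
  by case: w hp hd => // b w /(_ (comp b)); rewrite /proj /= eqxx.
set i := comp a.
have hw : has (fun e => comp e == i) w by rewrite has_filter -/(proj comp i w) hp /proj /= eqxx.
move: hp hd; case: (split_find hw) => b x y /eqP cb xi; rewrite cat_rcons => hp hd.
have /filter_nilP pxi := xi; have /hasPn cx := xi.
have [eb pyi] : b = a /\ proj comp i y = proj comp i w'.
  by have := hp i; rewrite /proj filter_cat pxi /= cb eqxx => -[].
subst b; have fx : d a -> filter d x = [::].
  move=> da; case fxe: (filter d x) => [//|e0 x0].
  have : e0 \in filter d x by rewrite fxe mem_head.
  rewrite mem_filter => /andP[_ /cx]; move: hd; rewrite filter_cat fxe /= da => -[->].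
  by rewrite /i eqxx.
have hx e : e \in x -> sound_commute M e a.
  move=> ex; have ne : comp a <> comp e by move=> ae; move: (cx e ex); rewrite -ae /i eqxx.
  case da: (d a).
    have : e \notin filter d x by rewrite fx.
    by rewrite mem_filter ex andbT => /indep_of_not_d [_]; apply.
  by apply: sound_commute_sym; case: (indep_of_not_d (negbT da)) => _; apply => /esym.
move=> /(semw_move_front hx) [t [hat hxy]]; exists t; split=> //; apply: IH hxy.
  move=> j; case: (j =P i) => [->|/eqP ne]; first by rewrite /proj filter_cat pxi.
  by have := hp j; rewrite /proj !filter_cat /= eq_sym (negbTE ne).
by move: hd; rewrite !filter_cat /=; case: (d a) fx => [/(_ isT) -> [->]|].
Qed.
End Reordering.

Section IndependentSpans.
Variables (T : eqType) (kind : T -> lkind) (C : Type) (M : T -> C -> C -> Prop).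
Variables (n : nat) (comp : T -> 'I_n) (d : pred T).
Hypothesis d_of_indep : forall i a, indep M comp i a -> ~~ d a.

Lemma indep_segment_dfree i s :
  (forall l a, onth s l = Some a -> indep M comp i a) -> ~~ has d s.
Proof. by move=> hs; apply/hasPn => e /onthP [l] /hs /d_of_indep. Qed.

Lemma indep_span_split i w j : indep_span kind M comp i w j ->
  exists p c m r q, w = p ++ c :: m ++ r :: q /\ (j = size p \/ j = size (p ++ c :: m)) /\
    kind c = LCall /\ kind r = LRet /\ balanced kind m /\ ~~ has d m.
Proof.
case=> k [hm hbet].
have {hm} [p [c [m [r [q [wd [sp [sk [kc [kr hw]]]]]]]]]] : exists p c m r q,
    w = p ++ c :: m ++ r :: q /\ size p = minn j k /\ size (p ++ c :: m) = maxn j k /\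
    kind c = LCall /\ kind r = LRet /\ wm kind m.
  case: hm => hm; have [jk _] := hm; have [p [c [m [r [q H]]]]] := matched_split hm.
  - by exists p, c, m, r, q; rewrite (minn_idPl (ltnW jk)) (maxn_idPr (ltnW jk)).
  - by exists p, c, m, r, q; rewrite (minn_idPr (ltnW jk)) (maxn_idPl (ltnW jk)).
exists p, c, m, r, q; split=> //; split; first by case: (leqP j k) => jk; [left|right]; lia.
do 2!split=> //; split; first exact: wm_balanced.
apply/hasPn => e em; case/splitPr: em wd sk => m1 m2 wd sk.
have pos : minn j k < size (p ++ c :: m1) < maxn j k.
  by rewrite -sp -sk !size_cat /= size_cat /=; lia.
have : onth w (size (p ++ c :: m1)) = Some e.
  by apply/onth_splitP; exists (p ++ c :: m1), (m2 ++ r :: q); rewrite wd -!catA.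
by move/(hbet _ _ pos)/d_of_indep.
Qed.

Lemma tail_returns_closed i w u v : w = u ++ v -> split_cond kind M comp i w u ->
  (forall l a, onth v l = Some a -> indep M comp i a) -> returns_closed kind d w.
Proof.
move=> wuv hsc /indep_segment_dfree dv x r y wd kr hy.
have ltxu : size x < size u.
  rewrite ltnNge; apply/negP => lexu; move: dv.
  have -> : v = drop (size u) x ++ r :: y by rewrite -drop_cat_leq // -wd wuv drop_size_cat.
  by rewrite has_cat /= hy !orbT.
have ox : onth w (size x) = Some r by apply/onth_splitP; exists x, y.
have [p [c [m [r' [q [wd' [[pos|pos] [kc [kr' hm]]]]]]]]] :=
  indep_span_split (hsc _ _ ox (or_intror (conj kr ltxu))).
  have : onth w (size x) = Some c by rewrite pos; apply/onth_splitP; exists p, (m ++ r' :: q).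
  by rewrite ox => -[ec]; move: kr; rewrite ec kc.
have [ex _] : x = p ++ c :: m /\ r :: y = r' :: q.
  by apply: cat_eq_size; rewrite // -catA -wd -wd'.
by exists p, c, m.
Qed.

Lemma head_returns_closed i w u v : w = u ++ v -> split_cond kind M comp i w u ->
  (forall l a, onth u l = Some a -> indep M comp i a) ->
  returns_closed (fun a => swap_kind (kind a)) d (rev w).
Proof.
move=> wuv hsc /indep_segment_dfree du x r y wd kr hy.
have wd' : w = rev y ++ r :: rev x by rewrite -[w]revK wd rev_cat rev_cons cat_rcons.
have kc : kind r = LCall by move: kr; case: (kind r).
have leuy : size u <= size (rev y).
  rewrite leqNgt; apply/negP => ltyu; move: du.
  have -> : u = rev y ++ drop (size (rev y)) u.
    have := congr1 (take (size (rev y))) (etrans (esym wuv) wd').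
    rewrite take_cat ltyu take_size_cat // => ety.
    by rewrite -{1}(cat_take_drop (size (rev y)) u) ety.
  by rewrite has_cat has_rev hy.
have oy : onth w (size (rev y)) = Some r by apply/onth_splitP; exists (rev y), (rev x).
have [p [c [m [r' [q [wd2 [[pos|pos] [kc' [kr' [bm dm]]]]]]]]]] :=
  indep_span_split (hsc _ _ oy (or_introl (conj kc leuy))); last first.
  have : onth w (size (rev y)) = Some r'.
    by rewrite pos; apply/onth_splitP; exists (p ++ c :: m), q; rewrite wd2 -catA.
  by rewrite oy => -[er]; move: kc; rewrite er kr'.
have [_ [_ ex]] : rev y = p /\ r :: rev x = c :: m ++ r' :: q.
  by apply: cat_eq_size; rewrite // -wd' -wd2.
exists (rev q), r', (rev m); split; first by rewrite -[x]revK ex rev_cat rev_cons cat_rcons.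
by rewrite kr' has_rev; split=> //; split; [apply: balanced_rev|].
Qed.
End IndependentSpans.

Section IndependentLetters.
Variables (T : Type) (C : Type) (M : T -> C -> C -> Prop) (n : nat) (comp : T -> 'I_n).

Definition indepb (a : T) : bool :=
  if excluded_middle_informative (indep M comp (comp a) a) then true else false.

Lemma indepbP a : reflect (indep M comp (comp a) a) (indepb a).
Proof. by rewrite /indepb; case: excluded_middle_informative => h; constructor. Qed.

Lemma indepb_of_indep i a : indep M comp i a -> indepb a.
Proof. by move=> ia; apply/indepbP; case: (ia) => ->. Qed.
End IndependentLetters.

Lemma well_nested_reordering (T : eqType) (kind : T -> lkind) (C : Type)
    (M : T -> C -> C -> Prop) n (comp : T -> 'I_n) (d : pred T) (P : 'I_n -> seq T -> Prop) rho :
  (forall a, d a -> kind a = LInt) -> (forall i a, indep M comp i a -> ~~ d a) ->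
  (forall i w, P i w -> well_matched kind w) ->
  (forall i, tail_indep kind M comp i (P i)) \/ (forall i, head_indep kind M comp i (P i)) ->
  shuffle comp P rho ->
  exists w, (forall i, proj comp i w = proj comp i rho) /\ filter d w = filter d rho /\
    well_nested kind comp w.
Proof.
move=> d_internal d_of_indep hwm hind hsh.
have hb i := well_matched_balanced (hwm i _ (hsh i)).
case: hind => hind.
  have [|w [pw [fw nw]]] := nested_reordering d_internal (w := rho) _ hb.
    move=> i; have [u [v [wuv [hsc hv]]]] := hind i _ (hsh i).
    exact/(returns_closed_dep_blocks d_internal)/(tail_returns_closed d_of_indep wuv hsc hv).
  by exists w; do 2!split=> //; apply/nested_pairs_well_nested/(nested_from_pairs nw).
set kind' := fun a => swap_kind (kind a).
have d_internal' a : d a -> kind' a = LInt by move/d_internal; rewrite /kind' => ->.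
have proj_rev i : proj comp i (rev rho) = rev (proj comp i rho) by apply: filter_rev.
have hg' i : dep_blocks kind' d (proj comp i (rev rho)).
  have [u [v [wuv [hsc hu]]]] := hind i _ (hsh i); rewrite proj_rev.
  exact/(returns_closed_dep_blocks d_internal')/(head_returns_closed d_of_indep wuv hsc hu).
have hb' i : nodip kind' 0 (proj comp i (rev rho)) /\ height kind' 0 (proj comp i (rev rho)) = 0.
  by have [/nodip_rev + h0] := hb i; rewrite proj_rev h0.
have [w [pw [fw nw]]] := nested_reordering d_internal' hg' hb'.
exists (rev w); split; [|split].
- by move=> i; rewrite /proj filter_rev -/(proj comp i w) pw proj_rev revK.
- by rewrite filter_rev fw filter_rev revK.
- by apply/nested_pairs_well_nested/nested_pairs_rev; rewrite revK; apply: nested_from_pairs nw.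
Qed.

Theorem theorem5p3 (T : finType) (kind : T -> lkind) (n : nat)
  (comp : T -> 'I_n) (P : 'I_n -> seq T -> Prop) (C : Type)
  (M : T -> C -> C -> Prop) :
  (forall i w, P i w -> all (fun a => comp a == i) w) ->
  (forall i, is_VPL kind (P i)) ->
  (forall i w, P i w -> well_matched kind w) ->
  (forall a, kind a <> LInt -> indep M comp (comp a) a) ->
  ((forall i, tail_indep kind M comp i (P i)) \/
   (forall i, head_indep kind M comp i (P i))) ->
  forall pre post : C -> Prop,
    hoare M pre (bowtie kind comp P) post ->
    hoare M pre (shuffle comp P) post.
Proof.
move=> _ _ hwm hcr hind pre post H rho hsh s s' hsem hpre.
pose d := predC (indepb M comp).
have d_of_indep i a : indep M comp i a -> ~~ d a by move=> ia; rewrite /= (indepb_of_indep ia).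
have d_internal a : d a -> kind a = LInt.
  by move=> /negP nia; case E: (kind a) => //; case: nia; apply/indepbP/hcr; rewrite E.
have [w [pw [fw wn]]] := well_nested_reordering d_internal d_of_indep hwm hind hsh.
apply: (H w) hpre; first by split=> // i; rewrite pw; apply: hsh.
by apply: (semw_reorder (d := d)) hsem => // a /negPn /indepbP.
Qed.
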